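(* Let $X$ be a Banach space with a normalized $1$-unconditional basis $(e_i)_{i=1}^\infty$. There exists $P\subseteq\mathbb{N}$ such that for all $k\in\mathbb{N}$, \[\psi_P(k)\geq\tfrac12(\psi(k)-1).\]
   Context: Identify finitely supported real sequences with elements of $X$ via $e_i$; for finite $A\subseteq\mathbb{N}$, $1_A=\sum_{i\in A}e_i$. Define $\psi(k)=\|1_{[1,k]}\|_X$ and, for $P\subseteq\mathbb{N}$ with complement $P^c=\mathbb{N}\setminus P$, $\psi_P(k)=\min\{\|1_{[1,k]\cap P}\|_X,\|1_{[1,k]\cap P^c}\|_X\}$. Normalized means $\|e_i\|_X=1$; $1$-unconditional means $\|\sum_{i=1}^n a_ie_i\|_X\le\|\sum_{i=1}^n b_ie_i\|_X$ whenever $|a_i|\le|b_i|$ for all $i$. (Standing assumption in the paper: the basis is not equivalent to the standard basis of $c_0$.) *)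

From HB Require Import structures.
From mathcomp Require Import all_boot all_order all_algebra.
From mathcomp Require Import all_classical all_reals all_analysis.
Set Implicit Arguments. Unset Strict Implicit. Unset Printing Implicit Defensive.
Import Order.TTheory GRing.Theory Num.Theory.
Import numFieldNormedType.Exports.
Local Open Scope classical_set_scope.
Local Open Scope ring_scope.

(* Convention: the paper's basis (e_i)_{i>=1} is represented by
   e : nat -> X with  e i  standing for e_{i+1}.  Hence the interval
   [1,k] of the paper corresponds to indices i < k here, and a subset
   P of the paper's N corresponds to a predicate on these shifted indices. *)

Definition is_basis (R : realType) (X : normedModType R) (e : nat -> X) :=
  forall x : X, exists! a : nat -> R,
    (fun n : nat => \sum_(i < n) a i *: e i) @ \oo --> x.

Definition normalized (R : realType) (X : normedModType R) (e : nat -> X) :=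
  forall i, `|e i| = 1.

Definition one_unconditional (R : realType) (X : normedModType R)
  (e : nat -> X) :=
  forall (n : nat) (a b : nat -> R),
    (forall i, (i < n)%N -> `|a i| <= `|b i|) ->
    `|\sum_(i < n) a i *: e i| <= `|\sum_(i < n) b i *: e i|.

Definition psi (R : realType) (X : normedModType R) (e : nat -> X) (k : nat)
  : R := `|\sum_(i < k) e i|.

Definition psiP (R : realType) (X : normedModType R) (e : nat -> X)
  (P : set nat) (k : nat) : R :=
  Num.min `|\sum_(i < k | `[< P i >]) e i|
          `|\sum_(i < k | ~~ `[< P i >]) e i|.

From HB Require Import structures.
From mathcomp Require Import all_boot all_order all_algebra.
From mathcomp Require Import all_classical all_reals all_analysis.
From mathcomp Require Import lra.
Set Implicit Arguments. Unset Strict Implicit. Unset Printing Implicit Defensive.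
Import Order.TTheory GRing.Theory Num.Theory.
Import numFieldNormedType.Exports.
Local Open Scope ring_scope.

(* Split the basis greedily: e_k joins whichever of the two partial sums
   currently has the smaller norm.  By 1-unconditionality adding e_k does not
   decrease that norm, and by the triangle inequality it raises it by at most
   1, so the two norms always differ by at most 1.  Since they add up to at
   least psi(k), the smaller one is at least (psi(k) - 1)/2. *)

Lemma sum_ord_recr_if (V : nmodType) (F : nat -> V) (c : pred nat) k :
  \sum_(i < k.+1 | c i) F i = \sum_(i < k | c i) F i + (if c k then F k else 0).
Proof. by rewrite big_mkcond big_ord_recr /= -big_mkcond. Qed.

Lemma le_min_half_sub (R : realFieldType) (a b p : R) :
  `|a - b| <= 1 -> p <= a + b -> (p - 1) / 2 <= Num.min a b.
Proof.
rewrite ler_norml => /andP[? ?] ?.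
by rewrite le_min !ler_pdivrMr //; apply/andP; split; lra.
Qed.

Section UnconditionalBasis.
Variables (R : realType) (X : normedModType R) (e : nat -> X).
Hypotheses (e_normalized : normalized e) (e_uncond : one_unconditional e).

Lemma sum_basis_indicator n (c : pred nat) :
  \sum_(i < n | c i) e i = \sum_(i < n) (c i)%:R *: e i.
Proof.
by rewrite big_mkcond; apply: eq_bigr => i _; case: (c i); rewrite ?scale1r ?scale0r.
Qed.

Lemma norm_sum_basis_subset n (c d : pred nat) :
  (forall i, (i < n)%N -> c i -> d i) ->
  `|\sum_(i < n | c i) e i| <= `|\sum_(i < n | d i) e i|.
Proof.
move=> cd; rewrite !sum_basis_indicator.
apply: (@e_uncond n (fun i => (c i)%:R) (fun i => (d i)%:R)) => i /cd.
by case: (c i) => [/(_ isT) -> | _]; rewrite ?lexx ?normr0 ?normr_ge0.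
Qed.

Lemma norm_sum_basis_addr (c : pred nat) k (S := \sum_(i < k | c i) e i) :
  `|S| <= `|S + e k| <= `|S| + 1.
Proof.
apply/andP; split; last by rewrite -(e_normalized k) ler_normD.
pose c_lt i := c i && (i < k)%N; pose c_le i := c i || (i == k).
have -> : S + e k = \sum_(i < k.+1 | c_le i) e i.
  rewrite sum_ord_recr_if /c_le eqxx orbT; congr (_ + _).
  by apply: eq_bigl => i; rewrite (ltn_eqF (ltn_ord i)) orbF.
have -> : S = \sum_(i < k.+1 | c_lt i) e i.
  rewrite sum_ord_recr_if /c_lt ltnn andbF addr0.
  by apply: eq_bigl => i; rewrite ltn_ord andbT.
by apply: norm_sum_basis_subset => i _; rewrite /c_lt /c_le => /andP[->].
Qed.

Fixpoint greedy_sums (k : nat) : X * X :=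
  if k is k'.+1 then
    let: (a, b) := greedy_sums k' in
    if `|a| <= `|b| then (a + e k', b) else (a, b + e k')
  else (0, 0).

Definition greedy_side (i : nat) : bool :=
  `|(greedy_sums i).1| <= `|(greedy_sums i).2|.

Lemma greedy_sumsE k :
  greedy_sums k = (\sum_(i < k | greedy_side i) e i,
                   \sum_(i < k | ~~ greedy_side i) e i).
Proof.
elim: k => [|k IH]; first by rewrite !big_ord0.
have sideE : greedy_side k = (`|\sum_(i < k | greedy_side i) e i| <=
                               `|\sum_(i < k | ~~ greedy_side i) e i|).
  by rewrite /greedy_side IH.
rewrite [greedy_sums _]/= IH sum_ord_recr_if.
rewrite (sum_ord_recr_if e (fun i => ~~ greedy_side i)) /= sideE.
by case: ifP; rewrite addr0.
Qed.

Lemma greedy_sums_balanced k :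
  `| `|(greedy_sums k).1| - `|(greedy_sums k).2| | <= 1.
Proof.
elim: k => [|k IH]; first by rewrite /= normr0 subr0 normr0 ler01.
have /andP[? ?] := norm_sum_basis_addr greedy_side k.
have /andP[? ?] := norm_sum_basis_addr (fun i => ~~ greedy_side i) k.
move: IH; rewrite /= greedy_sumsE /= !ler_norml => /andP[? ?].
case: ifP => [? | /negbT]; last rewrite -ltNge => ?.
all: by apply/andP; split; lra.
Qed.

End UnconditionalBasis.

Theorem lemma3p1 (R : realType) (X : completeNormedModType R) (e : nat -> X) :
  is_basis e -> normalized e -> one_unconditional e ->
  exists P : set nat, forall k : nat,
    psiP e P k >= (psi e k - 1) / 2.
Proof.
move=> _ e_normalized e_uncond; exists (greedy_side e) => k.
rewrite /psiP /psi; under [X in Num.min `|X| _]eq_bigl do rewrite asboolb.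
under [X in Num.min _ `|X|]eq_bigl do rewrite asboolb.
have := greedy_sums_balanced e_normalized e_uncond k.
rewrite greedy_sumsE /= => balanced; apply: le_min_half_sub balanced _.
by rewrite (bigID (fun i : 'I_k => greedy_side e i)) /= ler_normD.
Qed.
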